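(* Let $\mathbb{N}_\vee$ be the semigroup $\mathbb{N}$ with operation $m\vee n=\max\{m,n\}$, and for $n\in\mathbb{N}\cup\{\infty\}$ let $\phi_n\in\Delta(\ell^1(\mathbb{N}_\vee))$ be $\phi_n(\sum_i\alpha_i\delta_i)=\sum_{i=1}^n\alpha_i$. Then $\ell^1(\mathbb{N}_\vee)$ is approximately left character biprojective (in particular approximately left $\phi_\infty$-biprojective), but $\ell^1(\mathbb{N}_\vee)$ is not $\phi_\infty$-biprojective.
   Context: The characters of $\ell^1(\mathbb{N}_\vee)$ are exactly the $\phi_n$, $n\in\mathbb{N}\cup\{\infty\}$. For a Banach algebra $A$, $A\otimes_pA$ is the projective tensor product with $a\cdot(b\otimes c)=ab\otimes c$, $(b\otimes c)\cdot a=b\otimes ca$, $\pi_A(a\otimes b)=ab$. For a character $\phi$, $A$ is $\phi$-biprojective if there is a bounded $A$-bimodule morphism $\rho:A\to A\otimes_pA$ with $\phi(\pi_A(\rho(a)))=\phi(a)$ for all $a\in A$. $A$ is approximately left $\phi$-biprojective if there is a net $(\rho_\alpha)$ of bounded linear maps $A\to A\otimes_pA$ such that for all $a,x\in A$: $\|a\cdot\rho_\alpha(x)-\rho_\alpha(ax)\|\to0$, $\|\rho_\alpha(xa)-\phi(a)\rho_\alpha(x)\|\to0$, $\phi(\pi_A(\rho_\alpha(x)))-\phi(x)\to0$; approximately left character biprojective means this holds for every character. *)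

From Stdlib Require Import Reals Lra ClassicalEpsilon.
Open Scope R_scope.

Definition C : Type := (R * R)%type.
Definition C0 : C := (0, 0).
Definition Cadd (z w : C) : C := (fst z + fst w, snd z + snd w).
Definition Copp (z : C) : C := (- fst z, - snd z).
Definition Csub (z w : C) : C := Cadd z (Copp w).
Definition Cmul (z w : C) : C :=
  (fst z * fst w - snd z * snd w, fst z * snd w + snd z * fst w).
Definition Cabs (z : C) : R := sqrt (fst z * fst z + snd z * snd z).

Fixpoint Csum (f : nat -> C) (n : nat) : C :=
  match n with O => C0 | S m => Cadd (Csum f m) (f m) end.
Fixpoint Rsum (f : nat -> R) (n : nat) : R :=
  match n with O => 0 | S m => Rsum f m + f m end.

(** * The algebra l^1(N_v):  a : nat -> C stands for sum_i a i delta_i.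
    The semigroup N is indexed from 0 here (the paper starts at 1). *)
Definition seq := nat -> C.

Definition l1_le (a : seq) (K : R) : Prop :=
  forall n, Rsum (fun i => Cabs (a i)) n <= K.
Definition l1 (a : seq) : Prop := exists K, l1_le a K.

Definition sadd (a b : seq) : seq := fun i => Cadd (a i) (b i).
Definition ssub (a b : seq) : seq := fun i => Csub (a i) (b i).
Definition sscal (c : C) (a : seq) : seq := fun i => Cmul c (a i).

(** Convolution for the max-semigroup:
    (a*b)_k = sum_{max(i,j)=k} a_i b_j = a_k * sum_{j<=k} b_j + b_k * sum_{i<k} a_i *)
Definition conv (a b : seq) : seq :=
  fun k => Cadd (Cmul (a k) (Csum b (S k))) (Cmul (b k) (Csum a k)).

(** * The projective tensor product l^1(N_v) (x)_p l^1(N_v), identified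
    (isometrically) with l^1(N x N):  T stands for sum T i j delta_i (x) delta_j. *)
Definition tens := nat -> nat -> C.

Definition l1t_le (T : tens) (K : R) : Prop :=
  forall n, Rsum (fun i => Rsum (fun j => Cabs (T i j)) n) n <= K.
Definition l1t (T : tens) : Prop := exists K, l1t_le T K.

Definition tadd (S T : tens) : tens := fun i j => Cadd (S i j) (T i j).
Definition tsub (S T : tens) : tens := fun i j => Csub (S i j) (T i j).
Definition tscal (c : C) (T : tens) : tens := fun i j => Cmul c (T i j).

(** a . (b (x) c) = ab (x) c *)
Definition lact (a : seq) (T : tens) : tens :=
  fun k l => conv a (fun p => T p l) k.
(** (b (x) c) . a = b (x) ca *)
Definition ract (T : tens) (a : seq) : tens :=
  fun k l => conv (T k) a l.
(** pi(b (x) c) = bc :  pi(T)_k = sum_{max(p,l)=k} T p l *)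
Definition piA (T : tens) : seq :=
  fun k => Cadd (Csum (fun l => T k l) (S k)) (Csum (fun p => T p k) k).

Definition bounded_linear (rho : seq -> tens) : Prop :=
  (forall a, l1 a -> l1t (rho a)) /\
  (forall a b, l1 a -> l1 b -> forall i j, rho (sadd a b) i j = tadd (rho a) (rho b) i j) /\
  (forall c a, l1 a -> forall i j, rho (sscal c a) i j = tscal c (rho a) i j) /\
  (exists M, forall a K, l1 a -> l1_le a K -> l1t_le (rho a) (M * K)).

Definition bimodule_morphism (rho : seq -> tens) : Prop :=
  forall a x, l1 a -> l1 x ->
    (forall i j, rho (conv a x) i j = lact a (rho x) i j) /\
    (forall i j, rho (conv x a) i j = ract (rho x) a i j).

Definition is_character (phi : seq -> C) : Prop :=
  (forall a b, l1 a -> l1 b -> phi (sadd a b) = Cadd (phi a) (phi b)) /\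
  (forall c a, l1 a -> phi (sscal c a) = Cmul c (phi a)) /\
  (forall a b, l1 a -> l1 b -> phi (conv a b) = Cmul (phi a) (phi b)) /\
  (exists a, l1 a /\ phi a <> C0) /\
  (exists M, forall a K, l1 a -> l1_le a K -> Cabs (phi a) <= M * K).

Definition Csum_to (a : seq) (s : C) : Prop :=
  Un_cv (fun n => fst (Csum a n)) (fst s) /\ Un_cv (fun n => snd (Csum a n)) (snd s).

Definition phi_inf (a : seq) : C :=
  match excluded_middle_informative (exists s, Csum_to a s) with
  | left H => proj1_sig (constructive_indefinite_description _ H)
  | right _ => C0
  end.

Definition phi_biprojective (phi : seq -> C) : Prop :=
  exists rho : seq -> tens,
    bounded_linear rho /\ bimodule_morphism rho /\
    forall a, l1 a -> phi (piA (rho a)) = phi a.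

Definition directed {I : Type} (le : I -> I -> Prop) : Prop :=
  (exists i : I, True) /\
  (forall i, le i i) /\
  (forall i j k, le i j -> le j k -> le i k) /\
  (forall i j, exists k, le i k /\ le j k).

Definition eventually {I : Type} (le : I -> I -> Prop) (P : I -> Prop) : Prop :=
  exists i0, forall i, le i0 i -> P i.

Definition approx_left_phi_biprojective (phi : seq -> C) : Prop :=
  exists (I : Type) (le : I -> I -> Prop) (rho : I -> seq -> tens),
    directed le /\
    (forall al, bounded_linear (rho al)) /\
    forall a x, l1 a -> l1 x ->
      (forall eps, eps > 0 -> eventually le (fun al =>
          l1t_le (tsub (lact a (rho al x)) (rho al (conv a x))) eps)) /\
      (forall eps, eps > 0 -> eventually le (fun al =>
          l1t_le (tsub (rho al (conv x a)) (tscal (phi a) (rho al x))) eps)) /\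
      (forall eps, eps > 0 -> eventually le (fun al =>
          Cabs (Csub (phi (piA (rho al x))) (phi x)) <= eps)).

Definition approx_left_character_biprojective : Prop :=
  forall phi, is_character phi -> approx_left_phi_biprojective phi.

(* Every character of l^1(N_v) is either phi_inf or a partial sum a |-> sum_(i<=k) a_i:
   the values phi(delta_n) are idempotent, equal to 1 at n = 0, and a first drop from 1 to 0
   at k+1 makes u = delta_k - delta_(k+1) an eigenvector, a * u = (sum_(i<=k) a_i) u.
   In both cases there are bounded v_m with phi(c v_m) = c and partial sums psi_m -> phi
   such that a v_m - psi_m(a) v_m -> 0 (v_m = delta_m resp. v_m = u), and
   x |-> psi_m(x) v_m (x) delta_0 is an approximate left phi-biprojection.
   Conversely, if rho were a phi_inf-biprojection, T = rho(delta_0) would commute with every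
   delta_k, which kills the column sums sum_(p<=k) T_(p,l) for l < k. The k-th partial sum of
   pi(T) is then the diagonal column sum sum_(p<=k) T_(p,k), which tends to 0 because T is
   summable, whereas phi_inf(pi(T)) = phi_inf(delta_0) = 1. *)

From Stdlib Require Import Reals Lra Lia Classical ClassicalEpsilon FunctionalExtensionality.
From Coquelicot Require Complex.
Open Scope R_scope.

Notation C1 := ((1, 0) : C).

Lemma Cext (z w : C) : fst z = fst w -> snd z = snd w -> z = w.
Proof. destruct z, w; simpl; intros; subst; reflexivity. Qed.

Lemma C_ring_theory : ring_theory C0 C1 Cadd Cmul Csub Copp (@eq C).
Proof. split; intros; apply Cext; unfold Csub, Cadd, Cmul, Copp, C0; simpl; ring. Qed.

Add Ring C_ring : C_ring_theory.

Lemma Cmul_idem (z : C) : Cmul z z = z -> z = C0 \/ z = C1.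
Proof.
  destruct z as [x y]; unfold Cmul; simpl; intros E; injection E as E1 E2.
  assert (Hy : y = 0).
  { destruct (Req_dec y 0) as [|Hy]; auto.
    assert (x = 1/2) by (apply (Rmult_eq_reg_l y); [nra | exact Hy]). nra. }
  subst y. assert (Hx : x * (x - 1) = 0) by nra.
  destruct (Rmult_integral _ _ Hx); [left | right]; apply Cext; simpl; lra.
Qed.

Lemma Cabs_Cmod z : Cabs z = Complex.Cmod z.
Proof. unfold Cabs, Complex.Cmod. f_equal. simpl. ring. Qed.

Lemma Cabs_ge0 z : 0 <= Cabs z.
Proof. apply sqrt_pos. Qed.

Lemma Cabs_mul z w : Cabs (Cmul z w) = Cabs z * Cabs w.
Proof. rewrite !Cabs_Cmod. apply Complex.Cmod_mult. Qed.

Lemma Cabs_add z w : Cabs (Cadd z w) <= Cabs z + Cabs w.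
Proof. rewrite !Cabs_Cmod. apply Complex.Cmod_triangle. Qed.

Lemma Cabs_opp z : Cabs (Copp z) = Cabs z.
Proof. unfold Cabs, Copp. f_equal. simpl. ring. Qed.

Lemma Cabs_sub_sym z w : Cabs (Csub z w) = Cabs (Csub w z).
Proof. replace (Csub z w) with (Copp (Csub w z)) by ring. apply Cabs_opp. Qed.

Lemma Cabs_C0 : Cabs C0 = 0.
Proof. unfold Cabs, C0. simpl. rewrite Rmult_0_l, Rplus_0_r. apply sqrt_0. Qed.

Lemma Cabs_sub_diag z : Cabs (Csub z z) = 0.
Proof. replace (Csub z z) with C0 by ring. apply Cabs_C0. Qed.

Lemma Cabs_C1 : Cabs C1 = 1.
Proof. unfold Cabs. simpl. rewrite Rmult_1_l, Rmult_0_l, Rplus_0_r. apply sqrt_1. Qed.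

Lemma Cabs_fst z : Rabs (fst z) <= Cabs z.
Proof. rewrite Cabs_Cmod. eapply Rle_trans; [apply Rmax_l | apply Complex.Rmax_Cmod]. Qed.

Lemma Cabs_snd z : Rabs (snd z) <= Cabs z.
Proof. rewrite Cabs_Cmod. eapply Rle_trans; [apply Rmax_r | apply Complex.Rmax_Cmod]. Qed.

Lemma Cabs_le_fst_snd z : Cabs z <= Rabs (fst z) + Rabs (snd z).
Proof.
  unfold Cabs. rewrite <- (sqrt_square (Rabs (fst z) + Rabs (snd z))).
  2:{ pose proof (Rabs_pos (fst z)); pose proof (Rabs_pos (snd z)); lra. }
  apply sqrt_le_1_alt.
  pose proof (Rsqr_abs (fst z)); pose proof (Rsqr_abs (snd z)). unfold Rsqr in *.
  pose proof (Rabs_pos (fst z)); pose proof (Rabs_pos (snd z)). nra.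
Qed.

Lemma Rsum_ext f g n : (forall i, (i < n)%nat -> f i = g i) -> Rsum f n = Rsum g n.
Proof. induction n; simpl; intros H; auto. rewrite IHn, H; auto. Qed.

Lemma Rsum_le f g n : (forall i, (i < n)%nat -> f i <= g i) -> Rsum f n <= Rsum g n.
Proof.
  induction n; simpl; intros H; [lra|].
  pose proof (H n ltac:(lia)). pose proof (IHn ltac:(auto)). lra.
Qed.

Lemma Rsum_plus f g n : Rsum (fun i => f i + g i) n = Rsum f n + Rsum g n.
Proof. induction n; simpl; [|rewrite IHn]; ring. Qed.

Lemma Rsum_scal c f n : Rsum (fun i => c * f i) n = c * Rsum f n.
Proof. induction n; simpl; [|rewrite IHn]; ring. Qed.

Lemma Rsum_const0 n : Rsum (fun _ => 0) n = 0.
Proof. induction n; simpl; [|rewrite IHn]; ring. Qed.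

Lemma Rsum_nonneg f n : (forall i, 0 <= f i) -> 0 <= Rsum f n.
Proof. intros H. induction n; simpl; [lra|]. pose proof (H n). lra. Qed.

Lemma Rsum_incr f m n : (forall i, 0 <= f i) -> (m <= n)%nat -> Rsum f m <= Rsum f n.
Proof. intros H. induction 1; simpl; [lra|]. pose proof (H m0). lra. Qed.

Lemma Rsum_single f m n : (forall i, i <> m -> f i = 0) ->
  Rsum f n = if (m <? n)%nat then f m else 0.
Proof.
  intros Hf. induction n as [|n IH]; simpl Rsum; [destruct m; reflexivity|].
  rewrite IH. destruct (Nat.ltb_spec m n), (Nat.ltb_spec m (S n)); try lia.
  - rewrite (Hf n) by lia. ring.
  - replace n with m by lia. ring.
  - rewrite (Hf n) by lia. ring.
Qed.

Lemma Rsum_tail f m N :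
  Rsum (fun i => if (m <? i)%nat then f i else 0) N = Rsum f (Nat.max N (S m)) - Rsum f (S m).
Proof.
  induction N as [|N IH]; [simpl; ring|].
  cbn [Rsum]. rewrite IH. destruct (Nat.ltb_spec m N).
  - rewrite !Nat.max_l by lia. cbn [Rsum]. ring.
  - rewrite !Nat.max_r by lia. cbn [Rsum]. ring.
Qed.

Lemma Rsum_swap (f : nat -> nat -> R) m n :
  Rsum (fun k => Rsum (fun p => f p k) m) n = Rsum (fun p => Rsum (fun k => f p k) n) m.
Proof.
  induction n; simpl.
  - rewrite Rsum_const0. reflexivity.
  - rewrite IHn, <- Rsum_plus. reflexivity.
Qed.

Lemma Rsum_diff_abs_le f g m n : (forall i, Rabs (f i) <= g i) -> (m <= n)%nat ->
  Rabs (Rsum f n - Rsum f m) <= Rsum g n - Rsum g m.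
Proof.
  intros H. induction 1 as [|n _ IH]; simpl.
  - unfold Rminus. rewrite Rplus_opp_r, Rabs_R0. lra.
  - replace (Rsum f n + f n - Rsum f m) with ((Rsum f n - Rsum f m) + f n) by ring.
    eapply Rle_trans; [apply Rabs_triang|]. pose proof (H n). lra.
Qed.

Lemma Csum_ext f g n : (forall i, (i < n)%nat -> f i = g i) -> Csum f n = Csum g n.
Proof. induction n; simpl; intros H; auto. rewrite IHn, H; auto. Qed.

Lemma Csum_const0 n : Csum (fun _ => C0) n = C0.
Proof. induction n; simpl; [|rewrite IHn]; ring. Qed.

Lemma Csum_S a n : Csum a (S n) = Cadd (Csum a n) (a n).
Proof. reflexivity. Qed.

Lemma Csum_add a b n : Csum (sadd a b) n = Cadd (Csum a n) (Csum b n).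
Proof. induction n; simpl; [|rewrite IHn; unfold sadd]; ring. Qed.

Lemma Csum_scal c a n : Csum (sscal c a) n = Cmul c (Csum a n).
Proof. induction n; simpl; [|rewrite IHn; unfold sscal]; ring. Qed.

Lemma Csum_fst a n : fst (Csum a n) = Rsum (fun i => fst (a i)) n.
Proof. induction n; simpl; [|rewrite IHn]; reflexivity. Qed.

Lemma Csum_snd a n : snd (Csum a n) = Rsum (fun i => snd (a i)) n.
Proof. induction n; simpl; [|rewrite IHn]; reflexivity. Qed.

Lemma Cabs_Csum a n : Cabs (Csum a n) <= Rsum (fun i => Cabs (a i)) n.
Proof.
  induction n; simpl; [rewrite Cabs_C0; lra|].
  eapply Rle_trans; [apply Cabs_add|]. lra.
Qed.

Lemma Csum_single a m n : (forall i, i <> m -> a i = C0) ->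
  Csum a n = if (m <? n)%nat then a m else C0.
Proof.
  intros Ha. induction n as [|n IH]; simpl Csum; [destruct m; reflexivity|].
  rewrite IH. destruct (Nat.ltb_spec m n), (Nat.ltb_spec m (S n)); try lia.
  - rewrite (Ha n) by lia. ring.
  - replace n with m by lia. ring.
  - rewrite (Ha n) by lia. ring.
Qed.

Lemma Csum_conv a b n : Csum (conv a b) n = Cmul (Csum a n) (Csum b n).
Proof. induction n; simpl; [|rewrite IHn; unfold conv; simpl]; ring. Qed.

Lemma Cauchy_crit_Rsum_bounded f K :
  (forall i, 0 <= f i) -> (forall n, Rsum f n <= K) -> Cauchy_crit (Rsum f).
Proof.
  intros Hf HK. apply CV_Cauchy, growing_cv.
  - intros n. simpl. pose proof (Hf n). lra.
  - exists K. intros x [n ->]. apply HK.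
Qed.

Lemma Cauchy_crit_Rsum_dominated f g :
  (forall i, Rabs (f i) <= g i) -> Cauchy_crit (Rsum g) -> Cauchy_crit (Rsum f).
Proof.
  intros Hfg Hg eps Heps. destruct (Hg eps Heps) as [N HN]. exists N.
  assert (Hle : forall m n, (N <= m <= n)%nat -> Rdist (Rsum f n) (Rsum f m) < eps).
  { intros m n Hmn. unfold Rdist.
    eapply Rle_lt_trans; [apply (Rsum_diff_abs_le f g); auto; lia|].
    eapply Rle_lt_trans; [apply Rle_abs|]. apply HN; lia. }
  intros n m Hn Hm. destruct (Nat.le_ge_cases m n).
  - apply Hle. lia.
  - rewrite Rdist_sym. apply Hle. lia.
Qed.

Lemma Cauchy_crit_Rsum_tail f : Cauchy_crit (Rsum f) ->
  forall eps, eps > 0 -> exists m0, forall m n, (m0 <= m <= n)%nat -> Rsum f n - Rsum f m <= eps.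
Proof.
  intros Hf eps Heps. destruct (Hf eps Heps) as [m0 Hm0]. exists m0. intros m n Hmn.
  eapply Rle_trans; [apply Rle_abs|]. left. apply Hm0; lia.
Qed.

Lemma l1_le_nonneg a K : l1_le a K -> 0 <= K.
Proof. intros H. exact (H 0%nat). Qed.

Lemma l1_le_weaken a K K' : l1_le a K -> K <= K' -> l1_le a K'.
Proof. intros H HK n. specialize (H n). lra. Qed.

Lemma Cabs_Csum_le a K n : l1_le a K -> Cabs (Csum a n) <= K.
Proof. intros Ha. eapply Rle_trans; [apply Cabs_Csum | apply Ha]. Qed.

Lemma l1_Cauchy a : l1 a -> Cauchy_crit (Rsum (fun i => Cabs (a i))).
Proof. intros [K HK]. apply (Cauchy_crit_Rsum_bounded _ K); auto using Cabs_ge0. Qed.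

Lemma l1_le_sadd a b K L : l1_le a K -> l1_le b L -> l1_le (sadd a b) (K + L).
Proof.
  intros Ha Hb n. specialize (Ha n). specialize (Hb n).
  eapply Rle_trans; [apply (Rsum_le _ (fun i => Cabs (a i) + Cabs (b i)))|].
  - intros i _. apply Cabs_add.
  - rewrite Rsum_plus. lra.
Qed.

Lemma l1_le_sscal c a K : l1_le a K -> l1_le (sscal c a) (Cabs c * K).
Proof.
  intros Ha n. unfold sscal.
  rewrite (Rsum_ext _ (fun i => Cabs c * Cabs (a i))) by (intros; apply Cabs_mul).
  rewrite Rsum_scal. apply Rmult_le_compat_l; [apply Cabs_ge0 | apply Ha].
Qed.

Lemma l1_sscal c a : l1 a -> l1 (sscal c a).
Proof. intros [K Ha]. exists (Cabs c * K). apply l1_le_sscal, Ha. Qed.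

Lemma l1_summable a : l1 a -> exists s, Csum_to a s.
Proof.
  intros Ha.
  assert (Hre : Cauchy_crit (Rsum (fun i => fst (a i)))).
  { apply (Cauchy_crit_Rsum_dominated _ _ (fun i => Cabs_fst (a i))), l1_Cauchy, Ha. }
  assert (Him : Cauchy_crit (Rsum (fun i => snd (a i)))).
  { apply (Cauchy_crit_Rsum_dominated _ _ (fun i => Cabs_snd (a i))), l1_Cauchy, Ha. }
  destruct (R_complete _ Hre) as [re Hre'], (R_complete _ Him) as [im Him'].
  exists (re, im). split; simpl; intros eps Heps.
  - destruct (Hre' eps Heps) as [N HN]. exists N. intros n Hn. rewrite Csum_fst. auto.
  - destruct (Him' eps Heps) as [N HN]. exists N. intros n Hn. rewrite Csum_snd. auto.
Qed.

Lemma phi_inf_sum a : (exists s, Csum_to a s) -> Csum_to a (phi_inf a).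
Proof.
  intros H. unfold phi_inf. destruct (excluded_middle_informative _) as [H'|]; [|contradiction].
  exact (proj2_sig (constructive_indefinite_description _ H')).
Qed.

(* [phi_inf] takes the junk value [C0] on non-summable sequences. *)
Lemma phi_inf_neq0_summable a : phi_inf a <> C0 -> exists s, Csum_to a s.
Proof. unfold phi_inf. destruct (excluded_middle_informative _); tauto. Qed.

Lemma Csum_to_unique a s t : Csum_to a s -> Csum_to a t -> s = t.
Proof. intros [Hs1 Hs2] [Ht1 Ht2]. apply Cext; eapply UL_sequence; eauto. Qed.

Lemma phi_inf_eq a s : Csum_to a s -> phi_inf a = s.
Proof. intros H. apply (Csum_to_unique a); auto. apply phi_inf_sum. eauto. Qed.

Lemma Csum_to_eventually_const a s N : (forall n, (N <= n)%nat -> Csum a n = s) -> Csum_to a s.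
Proof.
  intros H. split; intros eps Heps; exists N; intros n Hn; rewrite (H n Hn);
    unfold Rdist; rewrite Rminus_diag, Rabs_R0; lra.
Qed.

Lemma phi_inf_partial_sums a : l1 a ->
  forall eps, eps > 0 -> eventually le (fun m => Cabs (Csub (phi_inf a) (Csum a m)) <= eps).
Proof.
  intros Ha eps Heps. destruct (phi_inf_sum a (l1_summable a Ha)) as [Hre Him].
  destruct (Hre (eps/2) ltac:(lra)) as [N1 HN1], (Him (eps/2) ltac:(lra)) as [N2 HN2].
  exists (Nat.max N1 N2). intros m Hm.
  specialize (HN1 m ltac:(lia)). specialize (HN2 m ltac:(lia)). unfold Rdist in *.
  eapply Rle_trans; [apply Cabs_le_fst_snd|]. unfold Csub, Cadd, Copp; simpl.
  rewrite Rabs_minus_sym in HN1, HN2. unfold Rminus in HN1, HN2. lra.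
Qed.

Lemma ssub_sadd_sscal a b : ssub a b = sadd a (sscal (Copp C1) b).
Proof. apply functional_extensionality; intro i. unfold ssub, sadd, sscal. ring. Qed.

Definition delta (m : nat) : seq := fun i => if (i =? m)%nat then C1 else C0.

Definition tail (m : nat) (a : seq) : seq := fun i => if (m <? i)%nat then a i else C0.

Lemma Csum_delta m n : Csum (delta m) n = if (m <? n)%nat then C1 else C0.
Proof.
  rewrite (Csum_single _ m).
  - unfold delta. rewrite Nat.eqb_refl. reflexivity.
  - intros i Hi. unfold delta. destruct (Nat.eqb_spec i m); congruence.
Qed.

Lemma l1_le_delta m : l1_le (delta m) 1.
Proof.
  intros n. rewrite (Rsum_single _ m).
  - unfold delta. rewrite Nat.eqb_refl, Cabs_C1. destruct (m <? n)%nat; lra.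
  - intros i Hi. unfold delta. destruct (Nat.eqb_spec i m); [congruence | apply Cabs_C0].
Qed.

Lemma l1_delta m : l1 (delta m).
Proof. exists 1. apply l1_le_delta. Qed.

Lemma l1_tail_small a : l1 a ->
  forall eps, eps > 0 -> eventually le (fun m => l1_le (tail m a) eps).
Proof.
  intros Ha eps Heps.
  destruct (Cauchy_crit_Rsum_tail _ (l1_Cauchy a Ha) eps Heps) as [m0 Hm0].
  exists m0. intros m Hm n.
  rewrite (Rsum_ext _ (fun i => if (m <? i)%nat then Cabs (a i) else 0)).
  - rewrite Rsum_tail. apply Hm0. lia.
  - intros i _. unfold tail. destruct (m <? i)%nat; auto using Cabs_C0.
Qed.

Lemma conv_delta_delta k n : conv (delta k) (delta n) = delta (Nat.max k n).
Proof.
  apply functional_extensionality; intro i. unfold conv. rewrite !Csum_delta. unfold delta.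
  destruct (Nat.eqb_spec i k), (Nat.eqb_spec i n), (Nat.eqb_spec i (Nat.max k n)),
    (Nat.ltb_spec n (S i)), (Nat.ltb_spec k i); try lia; ring.
Qed.

Lemma conv_delta0_r a : conv a (delta 0) = a.
Proof.
  apply functional_extensionality; intro i. unfold conv. rewrite Csum_delta. unfold delta.
  destruct i; simpl; ring.
Qed.

Lemma conv_delta_r a m : conv a (delta m) = sadd (sscal (Csum a (S m)) (delta m)) (tail m a).
Proof.
  apply functional_extensionality; intro i. unfold conv, sadd, sscal, tail.
  rewrite Csum_delta. unfold delta.
  destruct (Nat.eqb_spec i m), (Nat.ltb_spec m (S i)), (Nat.ltb_spec m i); try lia.
  - subst i. rewrite Csum_S. ring.
  - ring.
  - ring.
Qed.

Lemma conv_delta_step a k :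
  conv a (ssub (delta k) (delta (S k))) = sscal (Csum a (S k)) (ssub (delta k) (delta (S k))).
Proof.
  rewrite ssub_sadd_sscal. apply functional_extensionality; intro i.
  unfold conv. rewrite Csum_add, Csum_scal, !Csum_delta. unfold sadd, sscal, delta.
  destruct (Nat.eqb_spec i k), (Nat.eqb_spec i (S k)),
    (Nat.ltb_spec k (S i)), (Nat.ltb_spec (S k) (S i)); try lia.
  - subst i. rewrite Csum_S. ring.
  - subst i. ring.
  - ring.
  - ring.
Qed.

(** * Rank-one approximate biprojections *)

Definition otimes_delta0 (w : seq) : tens := fun i j => match j with O => w i | S _ => C0 end.

Definition rank_one_rho (v : seq) (n : nat) (x : seq) : tens := otimes_delta0 (sscal (Csum x n) v).

Lemma l1t_le_otimes_delta0 w K : l1_le w K -> l1t_le (otimes_delta0 w) K.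
Proof.
  intros Hw n. eapply Rle_trans; [|apply (Hw n)]. apply Rsum_le. intros i _.
  rewrite (Rsum_single _ 0).
  - destruct (0 <? n)%nat; [apply Rle_refl | apply Cabs_ge0].
  - intros [|j] Hj; [lia | apply Cabs_C0].
Qed.

Lemma piA_otimes_delta0 w : piA (otimes_delta0 w) = w.
Proof.
  apply functional_extensionality; intro k. unfold piA.
  rewrite (Csum_single _ 0) by (intros [|j] Hj; [lia | reflexivity]).
  destruct k; simpl; [|rewrite Csum_const0]; ring.
Qed.

Lemma rank_one_rho_bounded_linear v n B : l1_le v B -> bounded_linear (rank_one_rho v n).
Proof.
  intros Hv.
  assert (Hbound : forall a K, l1 a -> l1_le a K -> l1t_le (rank_one_rho v n a) (B * K)).
  { intros a K _ Ha. apply l1t_le_otimes_delta0.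
    eapply l1_le_weaken; [apply l1_le_sscal, Hv|].
    pose proof (Cabs_Csum_le a K n Ha). pose proof (l1_le_nonneg _ _ Hv).
    pose proof (Cabs_ge0 (Csum a n)). nra. }
  split; [|split; [|split]].
  - intros a [K Ha]. exists (B * K). apply Hbound; [exists K|]; auto.
  - intros a b _ _ i [|j]; unfold rank_one_rho, otimes_delta0, tadd;
      [rewrite Csum_add; unfold sscal|]; ring.
  - intros c a _ i [|j]; unfold rank_one_rho, otimes_delta0, tscal;
      [rewrite Csum_scal; unfold sscal|]; ring.
  - exists B. exact Hbound.
Qed.

Lemma lact_otimes_delta0 a w : lact a (otimes_delta0 w) = otimes_delta0 (conv a w).
Proof.
  apply functional_extensionality; intro i; apply functional_extensionality; intros [|j];
    unfold lact; [reflexivity|].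
  unfold conv; simpl. rewrite Csum_const0. ring.
Qed.

Lemma tsub_otimes_delta0 u w : tsub (otimes_delta0 u) (otimes_delta0 w) = otimes_delta0 (ssub u w).
Proof.
  apply functional_extensionality; intro i; apply functional_extensionality; intros [|j];
    unfold tsub, ssub; simpl; ring.
Qed.

Lemma rank_one_rho_lact_defect v n a x :
  tsub (lact a (rank_one_rho v n x)) (rank_one_rho v n (conv a x)) =
  otimes_delta0 (sscal (Csum x n) (ssub (conv a v) (sscal (Csum a n) v))).
Proof.
  unfold rank_one_rho. rewrite lact_otimes_delta0, tsub_otimes_delta0. f_equal.
  apply functional_extensionality; intro i.
  rewrite Csum_conv. unfold ssub, conv. rewrite Csum_scal. unfold sscal. ring.
Qed.

Lemma rank_one_rho_ract_defect v n a x c :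
  tsub (rank_one_rho v n (conv x a)) (tscal c (rank_one_rho v n x)) =
  otimes_delta0 (sscal (Cmul (Csum x n) (Csub (Csum a n) c)) v).
Proof.
  apply functional_extensionality; intro i; apply functional_extensionality; intros [|j];
    unfold tsub, tscal, rank_one_rho, otimes_delta0; rewrite ?Csum_conv; unfold sscal; ring.
Qed.

Lemma approx_left_phi_biprojective_of_eigenvectors phi (v : nat -> seq) (n : nat -> nat) B :
  (forall m, l1_le (v m) B) ->
  (forall a, l1 a -> forall eps, eps > 0 -> eventually le (fun m =>
     l1_le (ssub (conv a (v m)) (sscal (Csum a (n m)) (v m))) eps)) ->
  (forall a, l1 a -> forall eps, eps > 0 -> eventually le (fun m =>
     Cabs (Csub (phi a) (Csum a (n m))) <= eps)) ->
  (forall m c, phi (sscal c (v m)) = c) ->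
  approx_left_phi_biprojective phi.
Proof.
  intros Hv Heig Hpsi Hphi.
  exists nat, le, (fun m => rank_one_rho (v m) (n m)). split; [|split].
  { split; [exists 0%nat; exact I|]. split; [exact le_n|]. split; [exact Nat.le_trans|].
    intros i j. exists (Nat.max i j). lia. }
  { intros m. apply (rank_one_rho_bounded_linear _ _ B), Hv. }
  intros a x Ha [Kx Hx].
  pose proof (l1_le_nonneg _ _ Hx) as HKx.
  pose proof (l1_le_nonneg _ _ (Hv 0%nat)) as HB.
  assert (Hpsix : forall m, Cabs (Csum x m) <= Kx) by (intros; apply (Cabs_Csum_le _ _ _ Hx)).
  split; [|split]; intros eps Heps.
  - set (e := eps / (Kx + 1)).
    assert (He : e * (Kx + 1) = eps) by (unfold e; field; lra).
    destruct (Heig a Ha e) as [m0 Hm0]; [unfold e; apply Rdiv_lt_0_compat; lra|].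
    exists m0. intros m Hm. rewrite rank_one_rho_lact_defect.
    apply l1t_le_otimes_delta0. eapply l1_le_weaken; [apply l1_le_sscal, Hm0, Hm|].
    pose proof (Hpsix (n m)). pose proof (Cabs_ge0 (Csum x (n m))). nra.
  - set (e := eps / ((Kx + 1) * (B + 1))).
    assert (He : e * ((Kx + 1) * (B + 1)) = eps) by (unfold e; field; nra).
    destruct (Hpsi a Ha e) as [m0 Hm0]; [unfold e; apply Rdiv_lt_0_compat; nra|].
    exists m0. intros m Hm. rewrite rank_one_rho_ract_defect.
    apply l1t_le_otimes_delta0. eapply l1_le_weaken; [apply l1_le_sscal, Hv|].
    rewrite Cabs_mul, Cabs_sub_sym.
    pose proof (Hm0 m Hm). pose proof (Hpsix (n m)).
    pose proof (Cabs_ge0 (Csum x (n m))). pose proof (Cabs_ge0 (Csub (phi a) (Csum a (n m)))).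
    assert (Cabs (Csum x (n m)) * Cabs (Csub (phi a) (Csum a (n m))) <= Kx * e) by nra.
    nra.
  - destruct (Hpsi x (ex_intro _ Kx Hx) eps Heps) as [m0 Hm0].
    exists m0. intros m Hm. unfold rank_one_rho. rewrite piA_otimes_delta0, Hphi, Cabs_sub_sym.
    apply Hm0, Hm.
Qed.

Lemma delta_eigenvectors a : l1 a -> forall eps, eps > 0 -> eventually le (fun m =>
  l1_le (ssub (conv a (delta m)) (sscal (Csum a (S m)) (delta m))) eps).
Proof.
  intros Ha eps Heps. destruct (l1_tail_small a Ha eps Heps) as [m0 Hm0].
  exists m0. intros m Hm. rewrite conv_delta_r.
  replace (ssub _ _) with (tail m a); [apply Hm0, Hm|].
  apply functional_extensionality; intro i. unfold ssub, sadd. ring.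
Qed.

Lemma phi_inf_sscal_delta m c : phi_inf (sscal c (delta m)) = c.
Proof.
  apply phi_inf_eq, (Csum_to_eventually_const _ _ (S m)). intros n Hn.
  rewrite Csum_scal, Csum_delta. destruct (Nat.ltb_spec m n); [ring | lia].
Qed.

Lemma approx_left_phi_inf_biprojective : approx_left_phi_biprojective phi_inf.
Proof.
  apply (approx_left_phi_biprojective_of_eigenvectors _ delta S 1).
  - apply l1_le_delta.
  - apply delta_eigenvectors.
  - intros a Ha eps Heps. destruct (phi_inf_partial_sums a Ha eps Heps) as [m0 Hm0].
    exists m0. intros m Hm. apply Hm0. lia.
  - apply phi_inf_sscal_delta.
Qed.

(** * Characters *)

Section Characters.

Variable phi : seq -> C.
Hypothesis Hphi : is_character phi.

Lemma character_delta_idem n : phi (delta n) = C0 \/ phi (delta n) = C1.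
Proof.
  destruct Hphi as (_ & _ & Hmul & _). apply Cmul_idem.
  rewrite <- Hmul by apply l1_delta. rewrite conv_delta_delta, Nat.max_id. reflexivity.
Qed.

Lemma character_delta0 : phi (delta 0) = C1.
Proof.
  destruct Hphi as (_ & _ & Hmul & [a [Ha Hne]] & _).
  destruct (character_delta_idem 0) as [H0|H1]; [exfalso|exact H1].
  apply Hne. rewrite <- (conv_delta0_r a), Hmul, H0 by auto using l1_delta. ring.
Qed.

Lemma character_cases :
  (forall n, phi (delta n) = C1) \/ (exists k, phi (delta k) = C1 /\ phi (delta (S k)) = C0).
Proof.
  destruct (classic (forall n, phi (delta n) = C1)) as [|Hnot]; [left; auto | right].
  apply not_all_ex_not in Hnot as [n Hn].
  assert (H0 : phi (delta n) = C0) by (destruct (character_delta_idem n); tauto).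
  clear Hn. induction n as [|n IH].
  - rewrite character_delta0 in H0. apply (f_equal fst) in H0. simpl in H0. lra.
  - destruct (character_delta_idem n) as [E|E]; [apply IH, E | exists n; auto].
Qed.

Lemma approx_left_biprojective_of_character_delta_one :
  (forall n, phi (delta n) = C1) -> approx_left_phi_biprojective phi.
Proof.
  destruct Hphi as (Hadd & Hscal & Hmul & _ & [M HM]). intros Hone.
  assert (Hdelta : forall m c, phi (sscal c (delta m)) = c).
  { intros m c. rewrite Hscal, Hone by apply l1_delta. ring. }
  apply (approx_left_phi_biprojective_of_eigenvectors _ delta S 1).
  - apply l1_le_delta.
  - apply delta_eigenvectors.
  - intros a Ha eps Heps.
    set (e := eps / (Rabs M + 1)).
    assert (He : e * (Rabs M + 1) = eps) by (unfold e; field; pose proof (Rabs_pos M); lra).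
    destruct (l1_tail_small a Ha e) as [m0 Hm0];
      [unfold e; apply Rdiv_lt_0_compat; pose proof (Rabs_pos M); lra|].
    exists m0. intros m Hm. specialize (Hm0 m Hm).
    assert (Htail : l1 (tail m a)) by (exists e; exact Hm0).
    assert (E : Csub (phi a) (Csum a (S m)) = phi (tail m a)).
    { replace (phi a) with (Cmul (phi a) (phi (delta m))) by (rewrite Hone; ring).
      rewrite <- Hmul, conv_delta_r, Hadd, Hdelta by auto using l1_delta, l1_sscal. ring. }
    rewrite E. eapply Rle_trans; [apply (HM _ e); auto|].
    pose proof (Rle_abs M). pose proof (l1_le_nonneg _ _ Hm0). nra.
  - exact Hdelta.
Qed.

Lemma approx_left_biprojective_of_character_step k :
  phi (delta k) = C1 -> phi (delta (S k)) = C0 -> approx_left_phi_biprojective phi.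
Proof.
  destruct Hphi as (Hadd & Hscal & Hmul & _). intros Hk HSk.
  set (u := ssub (delta k) (delta (S k))).
  assert (Hu_l1 : l1_le u 2).
  { unfold u. rewrite ssub_sadd_sscal. eapply l1_le_weaken.
    - apply l1_le_sadd; [apply l1_le_delta | apply l1_le_sscal, l1_le_delta].
    - rewrite Cabs_opp, Cabs_C1. lra. }
  assert (Hu : l1 u) by (exists 2; exact Hu_l1).
  assert (Hphiu : phi u = C1).
  { unfold u. rewrite ssub_sadd_sscal, Hadd, Hscal, Hk, HSk by auto using l1_delta, l1_sscal.
    ring. }
  assert (Hconv : forall a, conv a u = sscal (Csum a (S k)) u) by (intros; apply conv_delta_step).
  assert (Hval : forall a, l1 a -> phi a = Csum a (S k)).
  { intros a Ha. replace (phi a) with (Cmul (phi a) (phi u)) by (rewrite Hphiu; ring).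
    rewrite <- Hmul, Hconv, Hscal, Hphiu by auto. ring. }
  apply (approx_left_phi_biprojective_of_eigenvectors _ (fun _ => u) (fun _ => S k) 2).
  - intros _. exact Hu_l1.
  - intros a Ha eps Heps. exists 0%nat. intros m _ N.
    rewrite (Rsum_ext _ (fun _ => 0)), Rsum_const0; [lra|].
    intros i _. rewrite Hconv. apply Cabs_sub_diag.
  - intros a Ha eps Heps. exists 0%nat. intros m _.
    rewrite Hval, Cabs_sub_diag by exact Ha. lra.
  - intros _ c. rewrite Hscal, Hphiu by exact Hu. ring.
Qed.

End Characters.

Lemma approx_left_character_biprojective_holds : approx_left_character_biprojective.
Proof.
  intros phi Hphi. destruct (character_cases phi Hphi) as [Hone | (k & Hk & HSk)].
  - apply approx_left_biprojective_of_character_delta_one; auto.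
  - apply (approx_left_biprojective_of_character_step phi Hphi k); auto.
Qed.

(** * Non-biprojectivity for phi_inf *)

Lemma Csum_piA (T : tens) n : Csum (piA T) n = Csum (fun l => Csum (fun p => T p l) n) n.
Proof.
  induction n as [|n IH]; [reflexivity|].
  rewrite Csum_S, IH. unfold piA.
  change (Csum (fun l => Csum (fun p => T p l) (S n)) (S n))
    with (Csum (sadd (fun l => Csum (fun p => T p l) n) (fun l => T n l)) (S n)).
  rewrite Csum_add, !Csum_S. ring.
Qed.

(* Entry (k, l) of [delta k . T] is sum_(p<=k) T p l; that of [T . delta k] is 0 for l < k. *)
Lemma column_sums_vanish (T : tens) k :
  (forall i j, lact (delta k) T i j = ract T (delta k) i j) ->
  forall l, (l < k)%nat -> Csum (fun p => T p l) (S k) = C0.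
Proof.
  intros Hcomm l Hl. specialize (Hcomm k l). unfold lact, ract, conv in Hcomm.
  rewrite !Csum_delta in Hcomm. unfold delta in Hcomm. rewrite Nat.eqb_refl in Hcomm.
  destruct (Nat.ltb_spec k k), (Nat.ltb_spec k (S l)), (Nat.eqb_spec l k); try lia.
  replace (Csum _ (S k)) with (Cadd (Cmul C1 (Csum (fun p => T p l) (S k))) (Cmul (T k l) C0))
    by ring.
  rewrite Hcomm. ring.
Qed.

Lemma commuting_tensor_partial_sums_small (T : tens) :
  l1t T -> (forall k i j, lact (delta k) T i j = ract T (delta k) i j) ->
  forall eps, eps > 0 -> eventually le (fun k => Cabs (Csum (piA T) (S k)) <= eps).
Proof.
  intros [K HK] Hcomm eps Heps.
  set (c := fun k => Rsum (fun p => Cabs (T p k)) (S k)).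
  assert (Hc : forall n, Rsum c n <= K).
  { intros n. eapply Rle_trans; [|apply (HK n)].
    rewrite <- (Rsum_swap (fun p k => Cabs (T p k))).
    apply Rsum_le. intros k Hk. apply Rsum_incr; [intros; apply Cabs_ge0 | lia]. }
  assert (Hc0 : forall k, 0 <= c k) by (intros; apply Rsum_nonneg; intros; apply Cabs_ge0).
  destruct (Cauchy_crit_Rsum_tail c (Cauchy_crit_Rsum_bounded c K Hc0 Hc) eps Heps)
    as [k0 Hk0].
  exists k0. intros k Hk. specialize (Hk0 k (S k) ltac:(lia)). simpl in Hk0.
  rewrite Csum_piA, Csum_S, (Csum_ext _ (fun _ => C0)), Csum_const0.
  - eapply Rle_trans; [|apply Hk0]. replace (Cadd C0 _) with (Csum (fun p => T p k) (S k)) by ring.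
    eapply Rle_trans; [apply Cabs_Csum | unfold c; lra].
  - intros l Hl. apply (column_sums_vanish T k); auto.
Qed.

Lemma phi_inf_not_biprojective : ~ phi_biprojective phi_inf.
Proof.
  intros [rho [[Hl1t _] [Hbim Hpi]]].
  set (T := rho (delta 0)).
  assert (Hcomm : forall k i j, lact (delta k) T i j = ract T (delta k) i j).
  { intros k i j. destruct (Hbim (delta k) (delta 0) (l1_delta k) (l1_delta 0)) as [HL HR].
    rewrite <- HL, <- HR, !conv_delta_delta, Nat.max_0_l, Nat.max_0_r. reflexivity. }
  assert (Hone : phi_inf (piA T) = C1).
  { unfold T. rewrite Hpi by apply l1_delta.
    rewrite <- (phi_inf_sscal_delta 0 C1). f_equal.
    apply functional_extensionality; intro i. unfold sscal. ring. }
  assert (Hsum : Csum_to (piA T) C1).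
  { rewrite <- Hone. apply phi_inf_sum, phi_inf_neq0_summable. rewrite Hone.
    intros E. apply (f_equal fst) in E. simpl in E. lra. }
  destruct Hsum as [Hre _]. destruct (Hre (1/2) ltac:(lra)) as [N HN].
  destruct (commuting_tensor_partial_sums_small T (Hl1t _ (l1_delta 0)) Hcomm (1/4)) as [k0 Hk0];
    [lra|].
  specialize (HN (S (Nat.max N k0)) ltac:(lia)). specialize (Hk0 (Nat.max N k0) ltac:(lia)).
  set (s := Csum (piA T) (S (Nat.max N k0))) in HN, Hk0.
  unfold Rdist in HN. cbn [fst] in HN. apply Rabs_def2 in HN.
  pose proof (Cabs_fst s). pose proof (Rle_abs (fst s)). lra.
Qed.

Theorem mainTheorem18 :
  approx_left_character_biprojective /\
  approx_left_phi_biprojective phi_inf /\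
  ~ phi_biprojective phi_inf.
Proof.
  split; [|split].
  - exact approx_left_character_biprojective_holds.
  - exact approx_left_phi_inf_biprojective.
  - exact phi_inf_not_biprojective.
Qed.
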